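(* For any pair of objects $A$ and $B$ in $\mathrm{ob}\,\mathcal{A}$, the map \[ \mathrm{d}_{f_\alpha}(A,B)=\inf\Big\{f_\alpha(\mathbf{c}) \mid \mathbf{c}\colon A\xleftrightarrow{\ \varphi\ } C \xleftrightarrow{\ \psi\ } B \Big\}, \] with the convention $\inf\emptyset=\infty$, defines an (extended) pseudometric on $\mathrm{ob}\,\mathcal{A}$.
   Context: Let $\mathcal{A}$ be an abelian category and $\alpha$ an amplitude on $\mathcal{A}$, i.e. a class function $\alpha\colon \mathrm{ob}\,\mathcal{A}\to[0,\infty]$ with $\alpha(0)=0$ such that for every short exact sequence $0\to A\to B\to C\to 0$ in $\mathcal{A}$ one has $\alpha(A)\le\alpha(B)$, $\alpha(C)\le\alpha(B)$ and $\alpha(B)\le\alpha(A)+\alpha(C)$. Let $f\colon[0,\infty]^4\to[0,\infty]$ be a cost function, i.e. $f$ is monotone, subadditive, $f(0)=0$, and $f(x_1,x_2,x_3,x_4)=f(x_3,x_2,x_1,x_4)=f(x_1,x_4,x_3,x_2)$. For a span or cospan $\mathbf{c}\colon A\xleftrightarrow{\ \varphi\ } C \xleftrightarrow{\ \psi\ } B$ in $\mathcal{A}$ (i.e. either $A\xleftarrow{\varphi}C\xrightarrow{\psi}B$ or $A\xrightarrow{\varphi}C\xleftarrow{\psi}B$), its $f$-cost is $f_\alpha(\mathbf{c})=f(\alpha(\ker\varphi),\alpha(\operatorname{coker}\varphi),\alpha(\ker\psi),\alpha(\operatorname{coker}\psi))$. The infimum is taken over all such spans and cospans between $A$ and $B$.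 *)

From HB Require Import structures.
From mathcomp Require Import all_boot all_order all_algebra.
From mathcomp Require Import all_classical all_reals.
From mathcomp Require Import ereal.
Set Implicit Arguments. Unset Strict Implicit. Unset Printing Implicit Defensive.
Import Order.TTheory GRing.Theory Num.Theory.
Local Open Scope classical_set_scope.
Local Open Scope ring_scope.

Record category := Category {
  Obj : Type;
  Hom : Obj -> Obj -> zmodType;
  idm : forall A : Obj, Hom A A;
  comp : forall A B C : Obj, Hom B C -> Hom A B -> Hom A C
}.
Arguments idm {c} A.
Arguments comp {c A B C} g f.

Section Abelian.
Variable K : category.
Local Notation Obj := (Obj K).
Local Notation Hom := (@Hom K).

Definition preadditive : Prop :=
  [/\ (forall (A B : Obj) (f : Hom A B), comp (idm B) f = f),
      (forall (A B : Obj) (f : Hom A B), comp f (idm A) = f),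
      (forall (A B C D : Obj) (h : Hom C D) (g : Hom B C) (f : Hom A B),
          comp h (comp g f) = comp (comp h g) f),
      (forall (A B C : Obj) (g g' : Hom B C) (f : Hom A B),
          comp (g + g') f = comp g f + comp g' f) &
      (forall (A B C : Obj) (g : Hom B C) (f f' : Hom A B),
          comp g (f + f') = comp g f + comp g f')].

Definition is_zero_obj (Z : Obj) : Prop :=
  forall X : Obj, (forall f : Hom X Z, f = 0) /\ (forall f : Hom Z X, f = 0).

Definition is_biproduct (A B P : Obj) (i1 : Hom A P) (i2 : Hom B P)
    (p1 : Hom P A) (p2 : Hom P B) : Prop :=
  [/\ comp p1 i1 = idm A, comp p2 i2 = idm B, comp p1 i2 = 0, comp p2 i1 = 0 &
      comp i1 p1 + comp i2 p2 = idm P].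

Definition is_kernel (A B : Obj) (f : Hom A B) (Kr : Obj) (k : Hom Kr A) : Prop :=
  comp f k = 0 /\
  forall (X : Obj) (g : Hom X A), comp f g = 0 -> exists! u : Hom X Kr, comp k u = g.

Definition is_cokernel (A B : Obj) (f : Hom A B) (Q : Obj) (q : Hom B Q) : Prop :=
  comp q f = 0 /\
  forall (X : Obj) (g : Hom B X), comp g f = 0 -> exists! u : Hom Q X, comp u q = g.

Definition mono (A B : Obj) (f : Hom A B) : Prop :=
  forall (X : Obj) (g h : Hom X A), comp f g = comp f h -> g = h.
Definition epi (A B : Obj) (f : Hom A B) : Prop :=
  forall (X : Obj) (g h : Hom B X), comp g f = comp h f -> g = h.

Definition is_abelian : Prop :=
  [/\ preadditive,
      (exists Z : Obj, is_zero_obj Z),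
      (
      (forall A B : Obj, exists (P : Obj) (i1 : Hom A P) (i2 : Hom B P)
          (p1 : Hom P A) (p2 : Hom P B), is_biproduct i1 i2 p1 p2) /\
      (forall (A B : Obj) (f : Hom A B), exists (Kr : Obj) (k : Hom Kr A), is_kernel f k) /\
      (forall (A B : Obj) (f : Hom A B), exists (Q : Obj) (q : Hom B Q), is_cokernel f q)) &
      ((forall (A B : Obj) (f : Hom A B), mono f ->
          exists (C : Obj) (g : Hom B C), is_kernel g f) /\
      (forall (A B : Obj) (f : Hom A B), epi f ->
          exists (C : Obj) (g : Hom C A), is_cokernel g f))].

Definition short_exact (A B C : Obj) (i : Hom A B) (p : Hom B C) : Prop :=
  is_kernel p i /\ is_cokernel i p.

Local Open Scope ereal_scope.
Variable R : realType.

Definition amplitude (alpha : Obj -> \bar R) : Prop :=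
  [/\ (forall A : Obj, 0 <= alpha A),
      (forall Z : Obj, is_zero_obj Z -> alpha Z = 0) &
      (forall (A B C : Obj) (i : Hom A B) (p : Hom B C), short_exact i p ->
         [/\ alpha A <= alpha B, alpha C <= alpha B & alpha B <= alpha A + alpha C])].

(** f-cost of a pair of morphisms (phi, psi): the value
    f(alpha(ker phi), alpha(coker phi), alpha(ker psi), alpha(coker psi)),
    for some choice of kernels and cokernels (independent of the choice,
    as alpha is invariant under isomorphism). *)
Definition has_cost (alpha : Obj -> \bar R)
    (f : \bar R -> \bar R -> \bar R -> \bar R -> \bar R)
    (X1 Y1 X2 Y2 : Obj) (phi : Hom X1 Y1) (psi : Hom X2 Y2) (x : \bar R) : Prop :=
  exists (K1 : Obj) (k1 : Hom K1 X1) (Q1 : Obj) (q1 : Hom Y1 Q1)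
         (K2 : Obj) (k2 : Hom K2 X2) (Q2 : Obj) (q2 : Hom Y2 Q2),
    [/\ is_kernel phi k1, is_cokernel phi q1, is_kernel psi k2, is_cokernel psi q2 &
        x = f (alpha K1) (alpha Q1) (alpha K2) (alpha Q2)].

(** costs of all spans A <- C -> B and cospans A -> C <- B *)
Definition cost_set (alpha : Obj -> \bar R)
    (f : \bar R -> \bar R -> \bar R -> \bar R -> \bar R) (A B : Obj) : set (\bar R) :=
  [set x | exists C : Obj,
     (exists (phi : Hom C A) (psi : Hom C B), has_cost alpha f phi psi x) \/
     (exists (phi : Hom A C) (psi : Hom B C), has_cost alpha f phi psi x)].

(** d_{f_alpha}(A,B); ereal_inf set0 = +oo *)
Definition dist (alpha : Obj -> \bar R)
    (f : \bar R -> \bar R -> \bar R -> \bar R -> \bar R) (A B : Obj) : \bar R :=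
  ereal_inf (cost_set alpha f A B).

Definition ext_pseudometric (d : Obj -> Obj -> \bar R) : Prop :=
  [/\ (forall A B : Obj, 0 <= d A B),
      (forall A : Obj, d A A = 0),
      (forall A B : Obj, d A B = d B A) &
      (forall A B C : Obj, d A C <= d A B + d B C)].

End Abelian.

Local Open Scope ereal_scope.
(** cost function f : [0,oo]^4 -> [0,oo]; properties required on [0,oo]^4 *)
Definition nonneg4 (R : realType) (x1 x2 x3 x4 : \bar R) : Prop :=
  [/\ 0 <= x1, 0 <= x2, 0 <= x3 & 0 <= x4].

Definition cost_function (R : realType)
    (f : \bar R -> \bar R -> \bar R -> \bar R -> \bar R) : Prop :=
  [/\ (forall x1 x2 x3 x4, nonneg4 x1 x2 x3 x4 -> 0 <= f x1 x2 x3 x4),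
      (forall x1 x2 x3 x4 y1 y2 y3 y4, nonneg4 x1 x2 x3 x4 ->
          x1 <= y1 -> x2 <= y2 -> x3 <= y3 -> x4 <= y4 ->
          f x1 x2 x3 x4 <= f y1 y2 y3 y4),
      (forall x1 x2 x3 x4 y1 y2 y3 y4, nonneg4 x1 x2 x3 x4 -> nonneg4 y1 y2 y3 y4 ->
          f (x1 + y1) (x2 + y2) (x3 + y3) (x4 + y4)
            <= f x1 x2 x3 x4 + f y1 y2 y3 y4),
      f 0 0 0 0 = 0 &
      (forall x1 x2 x3 x4, nonneg4 x1 x2 x3 x4 ->
          f x1 x2 x3 x4 = f x3 x2 x1 x4 /\ f x1 x2 x3 x4 = f x1 x4 x3 x2)].

From Pilot Require Import Defs.
From mathcomp Require Import all_boot all_order all_algebra.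
From mathcomp Require Import all_classical all_reals.
From mathcomp Require Import ereal.
Set Implicit Arguments. Unset Strict Implicit. Unset Printing Implicit Defensive.
Import Order.TTheory GRing.Theory Num.Theory.
Local Open Scope ring_scope.

(** Nonnegativity and symmetry of the distance come from those of [f], and the
    identity span of [A] has zero kernels and cokernels, so [d(A,A) = 0].
    For the triangle inequality, spans suffice: the pullback of a cospan is a
    span whose legs have kernels and cokernels embedding into those of the
    opposite legs of the cospan.  Two spans [A <- C -> B] and [B <- D -> E]
    compose through the pullback of [C -> B <- D], and the amplitude of the
    kernel (cokernel) of a composite is at most the sum of those of the
    factors, so monotonicity and subadditivity of [f] bound the cost of the
    composite by the sum of the costs.  Statements about cokernels and epis are
    obtained from those about kernels and monos in the opposite category. *)

Local Notation Hom K A B := (@Defs.Hom K A B).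
Local Notation "g \oc f" := (Defs.comp g f) (at level 40, left associativity).

Section Preadditive.
Variables (K : category) (hK : preadditive K).
Implicit Types A B C D X : Obj K.

Lemma compA A B C D (h : Hom K C D) (g : Hom K B C) (f : Hom K A B) :
  h \oc (g \oc f) = h \oc g \oc f.
Proof. by case: hK => _ _ ->. Qed.

Lemma comp1l A B (f : Hom K A B) : idm B \oc f = f.
Proof. by case: hK => ->. Qed.

Lemma comp1r A B (f : Hom K A B) : f \oc idm A = f.
Proof. by case: hK => _ ->. Qed.

Lemma compDl A B C (g g' : Hom K B C) (f : Hom K A B) :
  (g + g') \oc f = g \oc f + g' \oc f.
Proof. by case: hK => _ _ _ ->. Qed.

Lemma compDr A B C (g : Hom K B C) (f f' : Hom K A B) :
  g \oc (f + f') = g \oc f + g \oc f'.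
Proof. by case: hK => _ _ _ _ ->. Qed.

Lemma comp0l A B C (f : Hom K A B) : (0 : Hom K B C) \oc f = 0.
Proof. by apply/(addrI (0 \oc f)); rewrite -compDl !addr0. Qed.

Lemma comp0r A B C (g : Hom K B C) : g \oc (0 : Hom K A B) = 0.
Proof. by apply/(addrI (g \oc 0)); rewrite -compDr !addr0. Qed.

Lemma compNl A B C (g : Hom K B C) (f : Hom K A B) : (- g) \oc f = - (g \oc f).
Proof. by apply/eqP; rewrite -addr_eq0 -compDl addNr comp0l. Qed.

Lemma compNr A B C (g : Hom K B C) (f : Hom K A B) : g \oc (- f) = - (g \oc f).
Proof. by apply/eqP; rewrite -addr_eq0 -compDr addNr comp0r. Qed.

Lemma compBl A B C (g g' : Hom K B C) (f : Hom K A B) :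
  (g - g') \oc f = g \oc f - g' \oc f.
Proof. by rewrite compDl compNl. Qed.

Lemma compBr A B C (g : Hom K B C) (f f' : Hom K A B) :
  g \oc (f - f') = g \oc f - g \oc f'.
Proof. by rewrite compDr compNr. Qed.

Lemma monoP A B (m : Hom K A B) :
  mono m <-> (forall X (h : Hom K X A), m \oc h = 0 -> h = 0).
Proof.
split=> [mono_m X h mh0 | m_ker0 X g h mgh].
  by apply: mono_m; rewrite mh0 comp0r.
by apply/eqP; rewrite -subr_eq0; apply/eqP/m_ker0; rewrite compBr mgh subrr.
Qed.

Lemma mono_comp A B C (g : Hom K B C) (f : Hom K A B) :
  mono g -> mono f -> mono (g \oc f).
Proof. by move=> mono_g mono_f X a b; rewrite -!compA => /mono_g /mono_f. Qed.

Lemma mono_compr A B C (g : Hom K B C) (f : Hom K A B) : mono (g \oc f) -> mono f.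
Proof. by move=> mono_gf X a b fab; apply: mono_gf; rewrite -!compA fab. Qed.

Lemma kernel_mono A B (f : Hom K A B) Kr (k : Hom K Kr A) : is_kernel f k -> mono k.
Proof.
case=> fk0 kerP X g h kgh.
have fkg0 : f \oc (k \oc g) = 0 by rewrite compA fk0 comp0l.
have [u [_ uniq_u]] := kerP X _ fkg0.
by rewrite -(uniq_u g) // (uniq_u h).
Qed.

Lemma biproduct_proj_pair A B P X (i1 : Hom K A P) (i2 : Hom K B P) (p1 : Hom K P A)
    (p2 : Hom K P B) (g1 : Hom K X A) (g2 : Hom K X B) :
  is_biproduct i1 i2 p1 p2 ->
  p1 \oc (i1 \oc g1 + i2 \oc g2) = g1 /\ p2 \oc (i1 \oc g1 + i2 \oc g2) = g2.
Proof.
case=> p1i1 p2i2 p1i2 p2i1 _.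
by rewrite !compDr !compA p1i1 p2i2 p1i2 p2i1 !comp1l !comp0l addr0 add0r.
Qed.

Lemma biproduct_split A B P X (i1 : Hom K A P) (i2 : Hom K B P) (p1 : Hom K P A)
    (p2 : Hom K P B) (g : Hom K X P) :
  is_biproduct i1 i2 p1 p2 -> g = i1 \oc (p1 \oc g) + i2 \oc (p2 \oc g).
Proof. by case=> _ _ _ _ idP; rewrite !compA -compDl idP comp1l. Qed.

End Preadditive.

Definition op_category (K : category) : category :=
  @Category (Obj K) (fun A B => Hom K B A) (@idm K) (fun A B C g f => f \oc g).

Lemma preadditive_op (K : category) : preadditive K -> preadditive (op_category K).
Proof.
case=> id_l id_r assoc dist_l dist_r; split=> /=.
- by move=> A B f; apply: id_r.
- by move=> A B f; apply: id_l.
- by move=> A B C D h g f; rewrite assoc.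
- by move=> A B C g g' f; apply: dist_r.
- by move=> A B C g f f'; apply: dist_l.
Qed.

Lemma abelian_op (K : category) : is_abelian K -> is_abelian (op_category K).
Proof.
case=> hK [Z zeroZ] [biprod [kernels cokernels]] [monos epis]; split.
- exact: preadditive_op.
- by exists Z => X; have [] := zeroZ X.
- split; last split.
  + move=> A B; have [P [i1 [i2 [p1 [p2 [e1 e2 e3 e4 e5]]]]]] := biprod A B.
    by exists P, p1, p2, i1, i2; split.
  + by move=> A B f; have [Q [q cokq]] := cokernels _ _ f; exists Q, q.
  + by move=> A B f; have [Kr [k kerk]] := kernels _ _ f; exists Kr, k.
- split.
  + by move=> A B f epi_f; have [C [g cokg]] := epis _ _ f epi_f; exists C, g.
  + by move=> A B f mono_f; have [C [g kerg]] := monos _ _ f mono_f; exists C, g.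
Qed.

Lemma amplitude_op (K : category) (R : realType) (alpha : Obj K -> \bar R) :
  amplitude alpha -> @amplitude (op_category K) R alpha.
Proof.
case=> alpha_ge0 alpha_zero alpha_ses; split=> //.
- by move=> Z zeroZ; apply: alpha_zero => X; have [] := zeroZ X.
- move=> A B C i p [keri coki].
  have [] := alpha_ses C B A p i (conj coki keri).
  by rewrite addeC.
Qed.

Section PreadditiveEpi.
Variables (K : category) (hK : preadditive K).
Let hKop := preadditive_op hK.
Implicit Types A B C X : Obj K.

Lemma epiP A B (e : Hom K A B) :
  epi e <-> (forall X (h : Hom K B X), h \oc e = 0 -> h = 0).
Proof. exact: (@monoP (op_category K) hKop B A e). Qed.

Lemma epi_comp A B C (g : Hom K B C) (f : Hom K A B) :
  epi g -> epi f -> epi (g \oc f).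
Proof. by move=> epi_g epi_f; exact: (@mono_comp (op_category K) hKop C B A f g). Qed.

Lemma cokernel_epi A B (f : Hom K A B) Q (q : Hom K B Q) : is_cokernel f q -> epi q.
Proof. exact: (@kernel_mono (op_category K) hKop B A f Q q). Qed.

Lemma cokernel_epi_zero_obj A B Q (e : Hom K A B) (q : Hom K B Q) :
  epi e -> is_cokernel e q -> is_zero_obj Q.
Proof.
move=> epi_e [qe0 cokerP].
have [u [_ uniq_u]] := cokerP _ _ (@comp0l _ hK _ _ Q e).
have q0 : q = 0 by apply: epi_e; rewrite qe0 (comp0l hK).
have id0 : idm Q = 0.
  have <- : u = idm Q by apply: uniq_u; rewrite (comp1l hK).
  by apply: uniq_u; rewrite (comp0l hK).
move=> X; split=> h.
  by rewrite -(comp1l hK h) id0 (comp0l hK).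
by rewrite -(comp1r hK h) id0 (comp0r hK).
Qed.

End PreadditiveEpi.

Lemma abelian_preadditive (K : category) : is_abelian K -> preadditive K.
Proof. by case. Qed.

Section AbelianMono.
Variables (K : category) (hK : is_abelian K).
Let pK := abelian_preadditive hK.
Implicit Types A B C X : Obj K.

Lemma kernel_exists A B (f : Hom K A B) : exists Kr (k : Hom K Kr A), is_kernel f k.
Proof. by case: hK => _ _ [_ [+ _]] _; apply. Qed.

Lemma cokernel_exists A B (f : Hom K A B) : exists Q (q : Hom K B Q), is_cokernel f q.
Proof. by case: hK => _ _ [_ [_ +]] _; apply. Qed.

Lemma biproduct_exists A B : exists P (i1 : Hom K A P) (i2 : Hom K B P)
    (p1 : Hom K P A) (p2 : Hom K P B), is_biproduct i1 i2 p1 p2.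
Proof. by case: hK => _ _ [+ _] _; apply. Qed.

Lemma mono_kernel_cokernel A B Q (m : Hom K A B) (q : Hom K B Q) :
  mono m -> is_cokernel m q -> is_kernel q m.
Proof.
move=> mono_m [qm0 cokerP]; split=> // X h qh0.
have [C [g [gm0 kerP]]] : exists C (g : Hom K B C), is_kernel g m.
  by case: hK => _ _ _ [+ _]; apply.
have [u [ugq _]] := cokerP _ g gm0.
by apply: kerP; rewrite -ugq -(compA pK) qh0 (comp0r pK).
Qed.

End AbelianMono.

Lemma epi_cokernel_kernel (K : category) (hK : is_abelian K) (A B J : Obj K)
    (e : Hom K A B) (j : Hom K J A) :
  epi e -> is_kernel e j -> is_cokernel j e.
Proof. exact: (@mono_kernel_cokernel (op_category K) (abelian_op hK) B A J e j). Qed.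

Section Image.
Variables (K : category) (hK : is_abelian K).
Let pK := abelian_preadditive hK.
Implicit Types A B C X L : Obj K.

Lemma coimage_mono X L Kw C (w : Hom K X L) (kw : Hom K Kw X) (c : Hom K X C)
    (w' : Hom K C L) :
  is_kernel w kw -> is_cokernel kw c -> w' \oc c = w -> mono w'.
Proof.
(* The kernel [k'] of [w'] vanishes: [c] factors through the epi [p \oc c],
   whose kernel lies in [ker w], giving a retraction of [p = coker k']. *)
move=> [wkw0 kerwP] cokc w'c.
have [K' [k' kerk']] := kernel_exists hK w'.
have [C' [p cokp]] := cokernel_exists hK k'.
have [w'' [w''p _]] := cokp.2 _ _ kerk'.1.
have epi_pc := epi_comp pK (cokernel_epi pK cokp) (cokernel_epi pK cokc).
have [J [j kerj]] := kernel_exists hK (p \oc c).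
have [cj0 cokerP] := epi_cokernel_kernel hK epi_pc kerj.
have wj0 : w \oc j = 0.
  by rewrite -w'c -w''p -!(compA pK) (compA pK p) kerj.1 (comp0r pK).
have [t [kwt _]] := kerwP _ _ wj0.
have cj0' : c \oc j = 0 by rewrite -kwt (compA pK) cokc.1 (comp0l pK).
have [v [vpc _]] := cokerP _ _ cj0'.
have vp1 : v \oc p = idm C.
  by apply: (cokernel_epi pK cokc); rewrite -(compA pK) vpc (comp1l pK).
have k'0 : k' = 0 by rewrite -(comp1l pK k') -vp1 -(compA pK) cokp.1 (comp0r pK).
apply/(monoP pK) => Z h w'h0.
have [u [k'u _]] := kerk'.2 _ _ w'h0.
by rewrite -k'u k'0 (comp0l pK).
Qed.

Lemma image_factorization X L (w : Hom K X L) :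
  exists M (e : Hom K X M) (m : Hom K M L), [/\ epi e, mono m & m \oc e = w].
Proof.
have [Kw [kw kerkw]] := kernel_exists hK w.
have [C [c cokc]] := cokernel_exists hK kw.
have [w' [w'c _]] := cokc.2 _ _ kerkw.1.
exists C, c, w'; split=> //; first exact (cokernel_epi pK cokc).
exact: coimage_mono kerkw cokc w'c.
Qed.

End Image.

(* Uniqueness of the factorisation is stated as joint monicity of [p], [p']. *)
Definition is_pullback (K : category) (C D B P : Obj K) (psi : Hom K C B)
    (phi : Hom K D B) (p : Hom K P C) (p' : Hom K P D) : Prop :=
  [/\ psi \oc p = phi \oc p',
      (forall X (g1 : Hom K X C) (g2 : Hom K X D), psi \oc g1 = phi \oc g2 ->
         exists h, p \oc h = g1 /\ p' \oc h = g2) &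
      (forall X (h : Hom K X P), p \oc h = 0 -> p' \oc h = 0 -> h = 0)].

Section Pullback.
Variables (K : category) (hK : is_abelian K).
Let pK := abelian_preadditive hK.
Implicit Types A B C D P S X : Obj K.

Lemma pullback_sym C D B P (psi : Hom K C B) (phi : Hom K D B) (p : Hom K P C)
    (p' : Hom K P D) :
  is_pullback psi phi p p' -> is_pullback phi psi p' p.
Proof.
case=> comm univ jmono; split=> // [X g1 g2 comm' | X h p'h0 ph0].
  by have [h [hg2 hg1]] := univ X g2 g1 (esym comm'); exists h.
exact: jmono.
Qed.

Lemma biproduct_kernel_pullback C D B S P (psi : Hom K C B) (phi : Hom K D B)
    (i1 : Hom K C S) (i2 : Hom K D S) (p1 : Hom K S C) (p2 : Hom K S D)
    (k : Hom K P S) :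
  is_biproduct i1 i2 p1 p2 -> is_kernel (psi \oc p1 - phi \oc p2) k ->
  is_pullback psi phi (p1 \oc k) (p2 \oc k).
Proof.
move=> biprod [k0 kerP]; split.
- by apply/eqP; rewrite -subr_eq0 !(compA pK) -(compBl pK) k0.
- move=> X g1 g2 comm.
  have [p1g p2g] := biproduct_proj_pair pK g1 g2 biprod.
  have : (psi \oc p1 - phi \oc p2) \oc (i1 \oc g1 + i2 \oc g2) = 0.
    by rewrite (compBl pK) -!(compA pK) p1g p2g comm subrr.
  by case/kerP=> h [kh _]; exists h; rewrite -!(compA pK) kh.
- move=> X h; rewrite -!(compA pK) => p1kh0 p2kh0.
  apply: (proj1 (monoP pK k) (kernel_mono pK (conj k0 kerP))).
  by rewrite (biproduct_split pK (k \oc h) biprod) p1kh0 p2kh0 !(comp0r pK) addr0.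
Qed.

Lemma pullback_exists C D B (psi : Hom K C B) (phi : Hom K D B) :
  exists P (p : Hom K P C) (p' : Hom K P D), is_pullback psi phi p p'.
Proof.
have [S [i1 [i2 [p1 [p2 biprod]]]]] := biproduct_exists hK C D.
have [P [k kerk]] := kernel_exists hK (psi \oc p1 - phi \oc p2).
by exists P, (p1 \oc k), (p2 \oc k); apply: biproduct_kernel_pullback biprod kerk.
Qed.

Lemma pullback_biproduct_kernel C D B S P (psi : Hom K C B) (phi : Hom K D B)
    (p : Hom K P C) (p' : Hom K P D)
    (i1 : Hom K C S) (i2 : Hom K D S) (p1 : Hom K S C) (p2 : Hom K S D) :
  is_pullback psi phi p p' -> is_biproduct i1 i2 p1 p2 ->
  is_kernel (psi \oc p1 - phi \oc p2) (i1 \oc p + i2 \oc p').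
Proof.
move=> [comm univ jmono] biprod.
have [p1k p2k] := biproduct_proj_pair pK p p' biprod.
have mono_k : mono (i1 \oc p + i2 \oc p').
  apply/(monoP pK) => X h kh0; apply: jmono.
    by rewrite -p1k -(compA pK) kh0 (comp0r pK).
  by rewrite -p2k -(compA pK) kh0 (comp0r pK).
split; first by rewrite (compBl pK) -!(compA pK) p1k p2k comm subrr.
move=> Y g; rewrite (compBl pK) -!(compA pK) => /eqP; rewrite subr_eq0 => /eqP.
case/univ=> h [ph p'h].
have kh : (i1 \oc p + i2 \oc p') \oc h = g.
  by rewrite [RHS](biproduct_split pK g biprod) -ph -p'h (compDl pK) -!(compA pK).
by exists h; split=> // h' kh'; apply: mono_k; rewrite kh kh'.
Qed.

Lemma pullback_epi C D B P (psi : Hom K C B) (phi : Hom K D B) (p : Hom K P C)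
    (p' : Hom K P D) :
  is_pullback psi phi p p' -> epi phi -> epi p.
Proof.
(* [P] is the kernel of [sigma : C (+) D -> B], which is epi as [phi] is, so
   [sigma] is a cokernel of [P]; if [x \oc p = 0] then [x \oc p1] factors
   through [sigma] by a map killing [phi]. *)
move=> pb epi_phi.
have [S [i1 [i2 [p1 [p2 biprod]]]]] := biproduct_exists hK C D.
have [p1i1 p2i2 p1i2 _ _] := biprod.
set sigma := psi \oc p1 - phi \oc p2.
have sigma_i2 : sigma \oc i2 = - phi.
  by rewrite (compBl pK) -!(compA pK) p2i2 p1i2 (comp0r pK) (comp1r pK) sub0r.
have sigma_i2_inj X (y : Hom K B X) : y \oc sigma \oc i2 = 0 -> y = 0.
  rewrite -(compA pK) sigma_i2 (compNr pK) => /eqP; rewrite oppr_eq0 => /eqP.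
  exact: (proj1 (epiP pK phi) epi_phi).
have epi_sigma : epi sigma.
  by apply/(epiP pK) => X y ysigma0; apply: sigma_i2_inj; rewrite ysigma0 (comp0l pK).
have [sigma_k0 cokerP] :=
  epi_cokernel_kernel hK epi_sigma (pullback_biproduct_kernel pb biprod).
have [p1k _] := biproduct_proj_pair pK p p' biprod.
apply/(epiP pK) => X x xp0.
have [y [ysigma _]] : exists! y, y \oc sigma = x \oc p1.
  by apply: cokerP; rewrite -(compA pK) p1k.
have y0 : y = 0.
  by apply: sigma_i2_inj; rewrite ysigma -(compA pK) p1i2 (comp0r pK).
by rewrite -(comp1r pK x) -p1i1 (compA pK) -ysigma y0 !(comp0l pK).
Qed.

Lemma kernel_comp_pullback C B Q I J (psi : Hom K C B) (q : Hom K B Q)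
    (m : Hom K I B) (j : Hom K J C) (s : Hom K J I) :
  is_kernel q m -> is_kernel (q \oc psi) j -> psi \oc j = m \oc s ->
  is_pullback psi m j s.
Proof.
move=> kerm kerj comm; split=> // [X g1 g2 comm' | X h jh0 _].
  have : q \oc psi \oc g1 = 0.
    by rewrite -(compA pK) comm' (compA pK) kerm.1 (comp0l pK).
  case/kerj.2=> h [jh _]; exists h; split=> //.
  by apply: (kernel_mono pK kerm); rewrite (compA pK) -comm -(compA pK) jh.
exact: (proj1 (monoP pK j) (kernel_mono pK kerj)).
Qed.

Lemma pullback_paste C D B I J P (psi : Hom K C B) (m : Hom K I B) (e : Hom K D I)
    (j : Hom K J C) (s : Hom K J I) (p : Hom K P C) (p' : Hom K P D) (r : Hom K P J) :
  is_pullback psi (m \oc e) p p' -> is_pullback psi m j s ->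
  j \oc r = p -> s \oc r = e \oc p' -> is_pullback s e r p'.
Proof.
move=> [_ univ jmono] [comm_js _ jmono_js] jr sr.
split=> // [X g1 g2 sg | X h rh0 p'h0].
  have : psi \oc (j \oc g1) = m \oc e \oc g2.
    by rewrite (compA pK) comm_js -!(compA pK) sg.
  case/univ=> h [ph p'h]; exists h; split=> //.
  apply/eqP; rewrite -subr_eq0; apply/eqP/jmono_js.
    by rewrite (compBr pK) (compA pK) jr ph subrr.
  by rewrite (compBr pK) (compA pK) sr -(compA pK) p'h sg subrr.
by apply: jmono => //; rewrite -jr -(compA pK) rh0 (comp0r pK).
Qed.

End Pullback.

Local Open Scope ereal_scope.

Section Amplitude.
Variables (K : category) (hK : is_abelian K).
Variables (R : realType) (alpha : Obj K -> \bar R) (halpha : amplitude alpha).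
Let pK := abelian_preadditive hK.
Implicit Types A B C X Y Z L : Obj K.

Lemma amplitude_ge0 A : 0 <= alpha A.
Proof. by case: halpha. Qed.

Lemma amplitude_zero_obj Z : is_zero_obj Z -> alpha Z = 0.
Proof. by case: halpha => _ + _; apply. Qed.

Lemma amplitude_short_exact A B C (i : Hom K A B) (p : Hom K B C) :
  short_exact i p ->
  [/\ alpha A <= alpha B, alpha C <= alpha B & alpha B <= alpha A + alpha C].
Proof. by case: halpha => _ _; apply. Qed.

Lemma amplitude_mono A B (m : Hom K A B) : mono m -> alpha A <= alpha B.
Proof.
move=> mono_m; have [Q [q cokq]] := cokernel_exists hK m.
by have [] := amplitude_short_exact (conj (mono_kernel_cokernel hK mono_m cokq) cokq).
Qed.

Lemma amplitude_le_kernelD X L Kw (w : Hom K X L) (kw : Hom K Kw X) :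
  is_kernel w kw -> alpha X <= alpha Kw + alpha L.
Proof.
move=> kerkw; have [C [c cokc]] := cokernel_exists hK kw.
have kerc := mono_kernel_cokernel hK (kernel_mono pK kerkw) cokc.
have [_ _ alphaX] := amplitude_short_exact (conj kerc cokc).
have [w' [w'c _]] := cokc.2 _ _ kerkw.1.
apply: le_trans alphaX _; apply: leeD2l.
exact: amplitude_mono (coimage_mono hK kerkw cokc w'c).
Qed.

Lemma amplitude_kernel_comp X Y Z Kc Ka Kb (a : Hom K X Y) (b : Hom K Y Z)
    (k : Hom K Kc X) (ka : Hom K Ka X) (kb : Hom K Kb Y) :
  is_kernel (b \oc a) k -> is_kernel a ka -> is_kernel b kb ->
  alpha Kc <= alpha Ka + alpha Kb.
Proof.
move=> kerk kerka kerkb.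
have bak0 : b \oc (a \oc k) = 0%R by rewrite (compA pK) kerk.1.
have [w [kbw _]] := kerkb.2 _ _ bak0.
have [Kw [kw kerkw]] := kernel_exists hK w.
apply: le_trans (amplitude_le_kernelD kerkw) _; apply: leeD2r.
have akkw0 : a \oc (k \oc kw) = 0%R.
  by rewrite (compA pK) -kbw -(compA pK) kerkw.1 (comp0r pK).
have [t [kat _]] := kerka.2 _ _ akkw0.
apply: (@amplitude_mono _ _ t); apply: (mono_compr pK (g := ka)).
by rewrite kat; exact (mono_comp pK (kernel_mono pK kerk) (kernel_mono pK kerkw)).
Qed.

End Amplitude.

Lemma amplitude_cokernel_comp (K : category) (hK : is_abelian K) (R : realType)
    (alpha : Obj K -> \bar R) (halpha : amplitude alpha) (X Y Z Qc Qa Qb : Obj K)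
    (a : Hom K X Y) (b : Hom K Y Z) (q : Hom K Z Qc) (qa : Hom K Y Qa) (qb : Hom K Z Qb) :
  is_cokernel (b \oc a) q -> is_cokernel a qa -> is_cokernel b qb ->
  alpha Qc <= alpha Qa + alpha Qb.
Proof.
move=> cokq cokqa cokqb; rewrite addeC.
exact: (@amplitude_kernel_comp (op_category K) (abelian_op hK) R alpha
  (amplitude_op halpha) Z Y X Qc Qb Qa b a q qb qa cokq cokqb cokqa).
Qed.

Section AmplitudePullback.
Variables (K : category) (hK : is_abelian K).
Variables (R : realType) (alpha : Obj K -> \bar R) (halpha : amplitude alpha).
Let pK := abelian_preadditive hK.
Implicit Types B C D P : Obj K.

Lemma amplitude_pullback_kernel C D B P Kp Kf (psi : Hom K C B) (phi : Hom K D B)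
    (p : Hom K P C) (p' : Hom K P D) (kp : Hom K Kp P) (kf : Hom K Kf D) :
  is_pullback psi phi p p' -> is_kernel p kp -> is_kernel phi kf ->
  alpha Kp <= alpha Kf.
Proof.
move=> [comm _ jmono] kerkp kerkf.
have : phi \oc (p' \oc kp) = 0%R.
  by rewrite (compA pK) -comm -(compA pK) kerkp.1 (comp0r pK).
case/kerkf.2=> t [kft _]; apply: (amplitude_mono hK halpha (m := t)).
apply/(monoP pK) => X h th0.
apply: (proj1 (monoP pK kp) (kernel_mono pK kerkp)); apply: jmono.
  by rewrite (compA pK) kerkp.1 (comp0l pK).
by rewrite (compA pK) -kft -(compA pK) th0 (comp0r pK).
Qed.

(* Factor [phi = m \oc e] through its image: [p] is then the inclusion [j] of
   [ker (qf \oc psi)] precomposed with the pullback [r] of the epi [e], so the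
   cokernel of [p] is that of [j], which embeds into the cokernel of [phi]. *)
Lemma amplitude_pullback_cokernel C D B P Qp Qf (psi : Hom K C B) (phi : Hom K D B)
    (p : Hom K P C) (p' : Hom K P D) (qp : Hom K C Qp) (qf : Hom K B Qf) :
  is_pullback psi phi p p' -> is_cokernel p qp -> is_cokernel phi qf ->
  alpha Qp <= alpha Qf.
Proof.
move=> pb cokqp [qfphi0 cokerP].
have [I [e [m [epi_e mono_m me]]]] := image_factorization hK phi.
have cokm : is_cokernel m qf.
  split; first by apply: epi_e; rewrite -(compA pK) me qfphi0 (comp0l pK).
  by move=> X g gm0; apply: cokerP; rewrite -me (compA pK) gm0 (comp0l pK).
have kerm := mono_kernel_cokernel hK mono_m cokm.
have [J [j kerj]] := kernel_exists hK (qf \oc psi).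
have [s [ms _]] := kerm.2 _ (psi \oc j) (etrans (compA pK _ _ _) kerj.1).
have pb_js := kernel_comp_pullback hK kerm kerj (esym ms).
rewrite -me in pb; have [comm _ _] := pb.
have [_ univ_js _] := pb_js.
have [r [jr sr]] := univ_js _ _ _ (etrans comm (esym (compA pK _ _ _))).
have epi_r := pullback_epi hK (pullback_paste hK pb pb_js jr sr) epi_e.
have [Qr [qr cokqr]] := cokernel_exists hK r.
have [Qj [qj cokqj]] := cokernel_exists hK j.
have cokqp' : is_cokernel (j \oc r) qp by rewrite jr.
apply: le_trans (amplitude_cokernel_comp hK halpha cokqp' cokqr cokqj) _.
rewrite (amplitude_zero_obj halpha (cokernel_epi_zero_obj pK epi_r cokqr)) add0e.
have [w' [w'qj _]] := cokqj.2 _ _ kerj.1.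
exact (amplitude_mono hK halpha (coimage_mono hK kerj cokqj w'qj)).
Qed.

Lemma amplitude_pullback_comp_kernel C D B P G Kc Kg Kf (psi : Hom K C B)
    (phi : Hom K D B) (p : Hom K P C) (p' : Hom K P D) (g : Hom K C G)
    (k : Hom K Kc P) (kg : Hom K Kg C) (kf : Hom K Kf D) :
  is_pullback psi phi p p' -> is_kernel (g \oc p) k -> is_kernel g kg ->
  is_kernel phi kf -> alpha Kc <= alpha Kf + alpha Kg.
Proof.
move=> pb kerk kerkg kerkf; have [Kp [kp kerkp]] := kernel_exists hK p.
apply: le_trans (amplitude_kernel_comp hK halpha kerk kerkp kerkg) _.
exact: leeD2r (amplitude_pullback_kernel pb kerkp kerkf).
Qed.

Lemma amplitude_pullback_comp_cokernel C D B P G Qc Qg Qf (psi : Hom K C B)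
    (phi : Hom K D B) (p : Hom K P C) (p' : Hom K P D) (g : Hom K C G)
    (q : Hom K G Qc) (qg : Hom K G Qg) (qf : Hom K B Qf) :
  is_pullback psi phi p p' -> is_cokernel (g \oc p) q -> is_cokernel g qg ->
  is_cokernel phi qf -> alpha Qc <= alpha Qf + alpha Qg.
Proof.
move=> pb cokq cokqg cokqf; have [Qp [qp cokqp]] := cokernel_exists hK p.
apply: le_trans (amplitude_cokernel_comp hK halpha cokq cokqp cokqg) _.
exact: leeD2r (amplitude_pullback_cokernel pb cokqp cokqf).
Qed.

End AmplitudePullback.

Lemma le_ereal_infD (R : realType) (S1 S2 : set \bar R) (z : \bar R) :
  (forall x, S1 x -> 0 <= x) -> (forall y, S2 y -> 0 <= y) ->
  (forall x y, S1 x -> S2 y -> z <= x + y) ->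
  z <= ereal_inf S1 + ereal_inf S2.
Proof.
move=> S1_ge0 S2_ge0 zS.
have inf1_ge0 := le_ereal_inf_tmp S1_ge0; have inf2_ge0 := le_ereal_inf_tmp S2_ge0.
case E1 : (ereal_inf S1) inf1_ge0 => [a| |] // _; last first.
  by rewrite addye ?leey //; case: (ereal_inf S2) inf2_ge0.
case E2 : (ereal_inf S2) inf2_ge0 => [b| |] // _; last by rewrite addey ?leey.
apply/lee_addgt0Pr => eps eps_gt0.
have eps2_gt0 : (0 < eps / 2)%R by rewrite divr_gt0.
have [x S1x ltx] : exists2 x, S1 x & x < (a + eps / 2)%:E.
  by apply: ereal_inf_lt; rewrite E1 lte_fin ltrDl.
have [y S2y lty] : exists2 y, S2 y & y < (b + eps / 2)%:E.
  by apply: ereal_inf_lt; rewrite E2 lte_fin ltrDl.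
apply: le_trans (zS x y S1x S2y) _; apply: le_trans (leeD (ltW ltx) (ltW lty)) _.
by rewrite -!EFinD lee_fin addrACA -splitr.
Qed.

Section Cost.
Variables (K : category) (hK : is_abelian K).
Variables (R : realType) (alpha : Obj K -> \bar R) (halpha : amplitude alpha).
Variables (f : \bar R -> \bar R -> \bar R -> \bar R -> \bar R) (hf : cost_function f).
Let pK := abelian_preadditive hK.
Implicit Types A B C D E P : Obj K.

Lemma amplitude_nonneg4 A B C D : nonneg4 (alpha A) (alpha B) (alpha C) (alpha D).
Proof. by split; apply: (amplitude_ge0 halpha). Qed.

Lemma cost_swap x1 x2 x3 x4 : nonneg4 x1 x2 x3 x4 -> f x1 x2 x3 x4 = f x3 x4 x1 x2.
Proof.
case: hf => _ _ _ _ f_sym x_ge0; have [-> _] := f_sym _ _ _ _ x_ge0.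
have [x1_ge0 x2_ge0 x3_ge0 x4_ge0] := x_ge0.
by have [_ ->] := f_sym x3 x2 x1 x4 (And4 x3_ge0 x2_ge0 x1_ge0 x4_ge0).
Qed.

Lemma has_cost_ge0 X1 Y1 X2 Y2 (phi : Hom K X1 Y1) (psi : Hom K X2 Y2) x :
  has_cost alpha f phi psi x -> 0 <= x.
Proof.
case: hf => f_ge0 _ _ _ _ [K1 [k1 [Q1 [q1 [K2 [k2 [Q2 [q2 [_ _ _ _ ->]]]]]]]]].
exact/f_ge0/amplitude_nonneg4.
Qed.

Lemma has_cost_sym X1 Y1 X2 Y2 (phi : Hom K X1 Y1) (psi : Hom K X2 Y2) x :
  has_cost alpha f phi psi x -> has_cost alpha f psi phi x.
Proof.
case=> K1 [k1 [Q1 [q1 [K2 [k2 [Q2 [q2 [kerk1 cokq1 kerk2 cokq2 ->]]]]]]]].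
exists K2, k2, Q2, q2, K1, k1, Q1, q1; split=> //.
exact/cost_swap/amplitude_nonneg4.
Qed.

Lemma cost_set_ge0 A B x : cost_set alpha f A B x -> 0 <= x.
Proof. by case=> C [[phi [psi]] | [phi [psi]]]; apply: has_cost_ge0. Qed.

Lemma cost_set_sym A B x : cost_set alpha f A B x -> cost_set alpha f B A x.
Proof.
case=> C [[phi [psi cost]] | [phi [psi cost]]]; exists C; [left | right];
  by exists psi, phi; apply: has_cost_sym.
Qed.

Lemma cost_set_refl A : cost_set alpha f A A 0.
Proof.
have [_ [Z zeroZ] _ _] := hK.
have kerA : is_kernel (idm A) (0 : Hom K Z A)%R.
  split=> [|X g]; first by rewrite (comp0r pK).
  rewrite (comp1l pK) => ->; exists 0%R; split=> [|u _]; first by rewrite (comp0l pK).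
  by rewrite ((zeroZ X).1 u).
have cokA : is_cokernel (idm A) (0 : Hom K A Z)%R.
  split=> [|X g]; first by rewrite (comp0l pK).
  rewrite (comp1r pK) => ->; exists 0%R; split=> [|u _]; first by rewrite (comp0r pK).
  by rewrite ((zeroZ X).2 u).
exists A; left; exists (idm A), (idm A), Z, 0%R, Z, 0%R, Z, 0%R, Z, 0%R; split=> //.
by rewrite (amplitude_zero_obj halpha zeroZ); case: hf => _ _ _ ->.
Qed.

Lemma cospan_cost_ge_span A B C (phi : Hom K A C) (psi : Hom K B C) x :
  has_cost alpha f phi psi x ->
  exists P (p : Hom K P A) (p' : Hom K P B) y, has_cost alpha f p p' y /\ y <= x.
Proof.
case=> K1 [k1 [Q1 [q1 [K2 [k2 [Q2 [q2 [kerk1 cokq1 kerk2 cokq2 ->]]]]]]]].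
have [P [p [p' pb]]] := pullback_exists hK phi psi.
have [Ka [ka kerka]] := kernel_exists hK p.
have [Qa [qa cokqa]] := cokernel_exists hK p.
have [Kb [kb kerkb]] := kernel_exists hK p'.
have [Qb [qb cokqb]] := cokernel_exists hK p'.
exists P, p, p', (f (alpha Ka) (alpha Qa) (alpha Kb) (alpha Qb)); split.
  by exists Ka, ka, Qa, qa, Kb, kb, Qb, qb.
rewrite (cost_swap (amplitude_nonneg4 K1 Q1 K2 Q2)).
case: hf => _ f_mono _ _ _; apply: f_mono; first exact: amplitude_nonneg4.
- exact: (amplitude_pullback_kernel hK halpha pb kerka kerk2).
- exact: (amplitude_pullback_cokernel hK halpha pb cokqa cokq2).
- exact: (amplitude_pullback_kernel hK halpha (pullback_sym pb) kerkb kerk1).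
- exact: (amplitude_pullback_cokernel hK halpha (pullback_sym pb) cokqb cokq1).
Qed.

Lemma cost_set_span A B x : cost_set alpha f A B x ->
  exists C (phi : Hom K C A) (psi : Hom K C B) y, has_cost alpha f phi psi y /\ y <= x.
Proof.
case=> C [[phi [psi cost]] | [phi [psi cost]]]; first by exists C, phi, psi, x.
exact: cospan_cost_ge_span cost.
Qed.

Lemma span_comp_cost A B E C D (phi1 : Hom K C A) (psi1 : Hom K C B)
    (phi2 : Hom K D B) (psi2 : Hom K D E) x y :
  has_cost alpha f phi1 psi1 x -> has_cost alpha f phi2 psi2 y ->
  exists z, cost_set alpha f A E z /\ z <= x + y.
Proof.
case=> K1 [k1 [Q1 [q1 [K2 [k2 [Q2 [q2 [kerk1 cokq1 kerk2 cokq2 ->]]]]]]]].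
case=> K3 [k3 [Q3 [q3 [K4 [k4 [Q4 [q4 [kerk3 cokq3 kerk4 cokq4 ->]]]]]]]].
have [P [p [p' pb]]] := pullback_exists hK psi1 phi2.
have [Kc [kc kerkc]] := kernel_exists hK (phi1 \oc p).
have [Qc [qc cokqc]] := cokernel_exists hK (phi1 \oc p).
have [Kd [kd kerkd]] := kernel_exists hK (psi2 \oc p').
have [Qd [qd cokqd]] := cokernel_exists hK (psi2 \oc p').
exists (f (alpha Kc) (alpha Qc) (alpha Kd) (alpha Qd)); split.
  exists P; left; exists (phi1 \oc p), (psi2 \oc p').
  by exists Kc, kc, Qc, qc, Kd, kd, Qd, qd.
case: hf => _ f_mono f_subadd _ _.
apply: le_trans (f_subadd _ _ _ _ _ _ _ _ (amplitude_nonneg4 K1 Q1 K2 Q2)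
  (amplitude_nonneg4 K3 Q3 K4 Q4)).
apply: f_mono; first exact: amplitude_nonneg4.
- rewrite addeC.
  exact: (amplitude_pullback_comp_kernel hK halpha pb kerkc kerk1 kerk3).
- rewrite addeC.
  exact: (amplitude_pullback_comp_cokernel hK halpha pb cokqc cokq1 cokq3).
- have pb' := pullback_sym pb.
  exact: (amplitude_pullback_comp_kernel hK halpha pb' kerkd kerk4 kerk2).
- have pb' := pullback_sym pb.
  exact: (amplitude_pullback_comp_cokernel hK halpha pb' cokqd cokq4 cokq2).
Qed.

Lemma dist_ge0 A B : 0 <= dist alpha f A B.
Proof. by apply: le_ereal_inf_tmp => x; apply: cost_set_ge0. Qed.

Lemma dist_refl A : dist alpha f A A = 0.
Proof.
by apply/eqP; rewrite eq_le ereal_inf_lbound ?dist_ge0 //; apply: cost_set_refl.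
Qed.

Lemma dist_sym A B : dist alpha f A B = dist alpha f B A.
Proof. by congr ereal_inf; apply/seteqP; split=> x; apply: cost_set_sym. Qed.

Lemma dist_triangle A B C : dist alpha f A C <= dist alpha f A B + dist alpha f B C.
Proof.
apply: le_ereal_infD; [exact: cost_set_ge0 | exact: cost_set_ge0 |].
move=> x y /cost_set_span [D [phi1 [psi1 [x' [cost_x' le_x'x]]]]].
move=> /cost_set_span [E [phi2 [psi2 [y' [cost_y' le_y'y]]]]].
have [z [cost_z le_z]] := span_comp_cost cost_x' cost_y'.
exact: le_trans (ereal_inf_lbound cost_z) (le_trans le_z (leeD le_x'x le_y'y)).
Qed.

End Cost.

Theorem mainTheorem4 (R : realType) (K : category) (habel : is_abelian K)
    (alpha : Obj K -> \bar R) (halpha : amplitude alpha)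
    (f : \bar R -> \bar R -> \bar R -> \bar R -> \bar R) (hf : cost_function f) :
  ext_pseudometric (dist alpha f).
Proof.
split.
- exact: (dist_ge0 halpha hf).
- exact: (dist_refl habel halpha hf).
- exact: (dist_sym halpha hf).
- exact: (dist_triangle habel halpha hf).
Qed.
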